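(* Let $C\subset\mathbb{R}^d$ be a nonempty closed convex set, let $f(x)=\mathbb{E}_\xi[f(x,\xi)]$ where each $f(\cdot,\xi)$ is convex and $G$-Lipschitz on $\mathbb{R}^d$, and let $x_*\in\arg\min_{x\in C}f(x)$. Let $x_{k-1},z_k\in\mathbb{R}^d$, $0<c_k\le1$, $\eta_k>0$, a sample $\xi_k$, and set $$x_k=(1-c_k)x_{k-1}+c_kz_k,\qquad z_{k+1}=\Pi_C\big(z_k-\eta_k\nabla f(x_k,\xi_k)\big),$$ where $\nabla f(x_k,\xi_k)$ is a subgradient of $f(\cdot,\xi_k)$ at $x_k$. Then $$\|z_{k+1}-x_*\|^2\le\|z_k-x_*\|^2+\eta_k^2G^2-\frac{2}{c_k}\eta_k\left[f(x_k,\xi_k)-f(x_*,\xi_k)\right]+2\left(\frac{1}{c_k}-1\right)\eta_k\left[f(x_{k-1},\xi_k)-f(x_*,\xi_k)\right].$$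
   Context: $\Pi_C$ is the Euclidean projection onto $C$. $G$-Lipschitz means $|f(x,\xi)-f(y,\xi)|\le G\|x-y\|$ for all $x,y$. *)

From HB Require Import structures.
From mathcomp Require Import all_boot all_order all_algebra.
From mathcomp Require Import all_classical all_reals all_analysis.
Set Implicit Arguments. Unset Strict Implicit. Unset Printing Implicit Defensive.
Import Order.TTheory GRing.Theory Num.Theory.
Import numFieldNormedType.Exports.
Local Open Scope classical_set_scope.
Local Open Scope ring_scope.

Definition edot {R : realType} {d : nat} (u v : 'rV[R]_d) : R :=
  \sum_(i < d) u ord0 i * v ord0 i.
Definition enorm {R : realType} {d : nat} (u : 'rV[R]_d) : R :=
  Num.sqrt (edot u u).

Definition convex_subset {R : realType} {d : nat} (C : set 'rV[R]_d) : Prop :=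
  forall x y (t : R), C x -> C y -> 0 <= t -> t <= 1 ->
    C ((1 - t) *: x + t *: y).

Definition convex_fn {R : realType} {d : nat} (g : 'rV[R]_d -> R) : Prop :=
  forall x y (t : R), 0 <= t -> t <= 1 ->
    g ((1 - t) *: x + t *: y) <= (1 - t) * g x + t * g y.

Definition lipschitz_with {R : realType} {d : nat} (G : R) (g : 'rV[R]_d -> R) : Prop :=
  forall x y, `|g x - g y| <= G * enorm (x - y).

Definition is_subgradient {R : realType} {d : nat} (g : 'rV[R]_d -> R) (x s : 'rV[R]_d) : Prop :=
  forall y, g x + edot s (y - x) <= g y.

Definition is_proj {R : realType} {d : nat} (C : set 'rV[R]_d) (x p : 'rV[R]_d) : Prop :=
  C p /\ forall y, C y -> enorm (x - p) <= enorm (x - y).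

From HB Require Import structures.
From mathcomp Require Import all_boot all_order all_algebra.
From mathcomp Require Import all_classical all_reals all_analysis.
From mathcomp Require Import ring lra.
Import Order.TTheory GRing.Theory Num.Theory.
Import numFieldNormedType.Exports.
Local Open Scope classical_set_scope.
Local Open Scope ring_scope.

(* The projection onto C is non-expansive towards points of C, so the squared
   distance of z_{k+1} to x_* is at most
   |z_k - x_*|^2 - 2 eta_k <g, z_k - x_*> + eta_k^2 |g|^2, with |g| <= G.
   Since z_k = x_k + (1/c_k - 1)(x_k - x_{k-1}), the subgradient inequality at
   x_k, applied towards x_* and towards x_{k-1}, bounds <g, z_k - x_*> from
   below by the two function gaps of the claim. *)

Section Euclidean.
Context {R : realType} {d : nat}.
Implicit Types (u v w : 'rV[R]_d) (a : R).

Lemma edotC u v : edot u v = edot v u.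
Proof. by apply: eq_bigr => i _; rewrite mulrC. Qed.

Lemma edotDl u v w : edot (u + v) w = edot u w + edot v w.
Proof. by rewrite /edot -big_split; apply: eq_bigr => i _; rewrite mxE mulrDl. Qed.

Lemma edotZl a u v : edot (a *: u) v = a * edot u v.
Proof. by rewrite /edot mulr_sumr; apply: eq_bigr => i _; rewrite mxE mulrA. Qed.

Lemma edotNl u v : edot (- u) v = - edot u v.
Proof. by rewrite -scaleN1r edotZl mulN1r. Qed.

Lemma edotDr u v w : edot w (u + v) = edot w u + edot w v.
Proof. by rewrite edotC edotDl !(edotC w). Qed.

Lemma edotZr a u v : edot u (a *: v) = a * edot u v.
Proof. by rewrite edotC edotZl edotC. Qed.

Lemma edot_ge0 u : 0 <= edot u u.
Proof. by apply: sumr_ge0 => i _; rewrite -expr2 sqr_ge0. Qed.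

Lemma enorm_ge0 u : 0 <= enorm u.
Proof. exact: sqrtr_ge0. Qed.

Lemma enorm_sqr u : enorm u ^+ 2 = edot u u.
Proof. by rewrite sqr_sqrtr // edot_ge0. Qed.

Lemma enorm_sqrD u v :
  enorm (u + v) ^+ 2 = enorm u ^+ 2 + 2 * edot u v + enorm v ^+ 2.
Proof. by rewrite !enorm_sqr !edotDl !edotDr (edotC v u); ring. Qed.

Lemma enorm_sqrB u v :
  enorm (u - v) ^+ 2 = enorm u ^+ 2 - 2 * edot u v + enorm v ^+ 2.
Proof.
by rewrite enorm_sqrD -scaleN1r edotZr !enorm_sqr edotZl edotZr; congr (_ + _); ring.
Qed.

Lemma enorm_sqrZ a u : enorm (a *: u) ^+ 2 = a ^+ 2 * enorm u ^+ 2.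
Proof. by rewrite !enorm_sqr edotZl edotZr mulrA -expr2. Qed.

Lemma enorm_sqr_le u v : enorm u <= enorm v -> enorm u ^+ 2 <= enorm v ^+ 2.
Proof. by move=> le_uv; rewrite !expr2 ler_pM // enorm_ge0. Qed.

End Euclidean.

Section Projection.
Context {R : realType} {d : nat} {C : set 'rV[R]_d}.
Hypothesis convexC : convex_subset C.

Lemma is_proj_dot_le0 {y p c} : is_proj C y p -> C c -> edot (y - p) (c - p) <= 0.
Proof.
move=> [Cp p_min] Cc; set u := y - p; set v := c - p.
rewrite leNgt; apply/negP => B_gt0.
have Q_ge0 := sqr_ge0 (enorm v).
(* the point p + t (c - p) of C with this t would be strictly closer to y *)
set t := edot u v / (edot u v + enorm v ^+ 2).
have BQ_gt0 : 0 < edot u v + enorm v ^+ 2 by lra.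
have t_gt0 : 0 < t by apply: divr_gt0.
have t_le1 : t <= 1 by rewrite ler_pdivrMr // mul1r; lra.
have tBQ : t * (edot u v + enorm v ^+ 2) = edot u v by rewrite mulfVK // gt_eqF.
have := enorm_sqr_le _ _ (p_min _ (convexC _ _ _ Cp Cc (ltW t_gt0) t_le1)).
have -> : y - ((1 - t) *: p + t *: c) = u - t *: v.
  by apply/rowP => i; rewrite !mxE; ring.
rewrite (enorm_sqrB u) edotZr enorm_sqrZ => dist_le.
have : 0 <= t * (t * enorm v ^+ 2 - 2 * edot u v) by nra.
nra.
Qed.

Lemma is_proj_dist_le {y p c} :
  is_proj C y p -> C c -> enorm (p - c) ^+ 2 <= enorm (y - c) ^+ 2.
Proof.
move=> proj_p Cc; have := is_proj_dot_le0 proj_p Cc.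
rewrite -(opprB p c) edotC edotNl edotC => dot_ge0.
have -> : y - c = (y - p) + (p - c) by rewrite addrA subrK.
by rewrite (enorm_sqrD (y - p)); have := sqr_ge0 (enorm (y - p)); lra.
Qed.

Lemma proj_step_dist_le {z x g} {eta : R} {z'} :
  is_proj C (z - eta *: g) z' -> C x ->
  enorm (z' - x) ^+ 2 <=
    enorm (z - x) ^+ 2 - 2 * eta * edot g (z - x) + eta ^+ 2 * enorm g ^+ 2.
Proof.
move=> proj_z' Cx; apply: le_trans (is_proj_dist_le proj_z' Cx) _.
have -> : z - eta *: g - x = (z - x) - eta *: g by rewrite addrAC.
by rewrite (enorm_sqrB (z - x)) edotZr enorm_sqrZ (edotC (z - x)); lra.
Qed.

End Projection.

Section Subgradient.
Context {R : realType} {d : nat} {f : 'rV[R]_d -> R}.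

Lemma subgradient_gap_le {x g} y : is_subgradient f x g -> f x - f y <= edot g (x - y).
Proof. by move=> /(_ y); rewrite -opprB edotC edotNl edotC; lra. Qed.

Lemma lipschitz_subgradient_sqr_le {G : R} {x g} :
  lipschitz_with G f -> is_subgradient f x g -> enorm g ^+ 2 <= G ^+ 2.
Proof.
move=> lipf sub_g; have xgx : x + g - x = g by rewrite addrAC subrr add0r.
have := sub_g (x + g); have := le_trans (ler_norm _) (lipf (x + g) x).
by rewrite xgx -enorm_sqr; have := enorm_ge0 g; nra.
Qed.

Lemma subgradient_gap_averaged {x' z} {c : R} {x g} y :
  0 < c -> c <= 1 -> x = (1 - c) *: x' + c *: z -> is_subgradient f x g ->
  c^-1 * (f x - f y) - (c^-1 - 1) * (f x' - f y) <= edot g (z - y).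
Proof.
move=> c_gt0 c_le1 def_x sub_g.
have -> : z - y = (x - y) + (c^-1 - 1) *: (x - x').
  by apply/rowP => i; rewrite def_x !mxE; field; rewrite gt_eqF.
rewrite edotC edotDl edotZl !(edotC _ g).
have cinv_sub1_ge0 : 0 <= c^-1 - 1 by rewrite subr_ge0 invf_ge1.
have := ler_wpM2l cinv_sub1_ge0 (subgradient_gap_le x' sub_g).
have := subgradient_gap_le y sub_g; lra.
Qed.

End Subgradient.

Theorem theorem15 (R : realType) (d : nat)
  (dX : measure_display) (Xi : measurableType dX) (P : probability Xi R)
  (F : Xi -> 'rV[R]_d -> R) (G : R) (C : set 'rV[R]_d)
  (xstar xprev zk x_k znext gk : 'rV[R]_d) (ck etak : R) (xik : Xi) :
  C !=set0 -> closed C -> convex_subset C ->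
  (forall xi, convex_fn (F xi)) ->
  (forall xi, lipschitz_with G (F xi)) ->
  (forall x, P.-integrable setT (fun xi => (F xi x)%:E)) ->
  C xstar ->
  (forall y, C y ->
     (\int[P]_(xi in setT) (F xi xstar)%:E <= \int[P]_(xi in setT) (F xi y)%:E)%E) ->
  0 < ck -> ck <= 1 -> 0 < etak ->
  x_k = (1 - ck) *: xprev + ck *: zk ->
  is_subgradient (F xik) x_k gk ->
  is_proj C (zk - etak *: gk) znext ->
  enorm (znext - xstar) ^+ 2 <=
    enorm (zk - xstar) ^+ 2 + etak ^+ 2 * G ^+ 2
    - 2 / ck * etak * (F xik x_k - F xik xstar)
    + 2 * (ck^-1 - 1) * etak * (F xik xprev - F xik xstar).
Proof.
move=> _ _ convexC _ lipF _ Cxstar _ ck_gt0 ck_le1 etak_gt0 def_xk sub_gk proj_znext.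
have step := proj_step_dist_le convexC proj_znext Cxstar.
have gap := subgradient_gap_averaged xstar ck_gt0 ck_le1 def_xk sub_gk.
have gk_le := lipschitz_subgradient_sqr_le (lipF xik) sub_gk.
have := ler_wpM2l (ltW etak_gt0) gap.
have := ler_wpM2l (sqr_ge0 etak) gk_le.
rewrite mulrA in step; lra.
Qed.
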